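(* Let $S$ be a commutative ring and $I\subseteq S$ an additive subgroup. Then: (1) the blowup $\mathrm{Bl}(I)=\mathrm{Bl}_S(I):=\bigcup_{k\ge 0}(I^k:I^k)_S$ is a subring of $S$; (2) if $R\subseteq S$ is a subring and $RI$ is an invertible ideal of $R$ within $S$, then $\mathrm{Bl}(I)\subseteq R$; (3) if for some $n\ge0$ the set $RI$ is an invertible ideal of $R=(I^n:I^n)_S$ within $S$, then $R=\mathrm{Bl}(I)$; (4) if $S$ is a number field and $I$ is finitely generated and non-zero, then there exists $n\ge 0$ such that $\mathrm{Bl}(I)=(I^n:I^n)_S$, and $\mathrm{Bl}(I)$ is an order.
   Context: For additive subgroups $I,J$ of a commutative ring $S$: $IJ$ is the set of finite sums $\sum x_iy_i$ with $x_i\in I$, $y_i\in J$; $(I:J)_S=\{x\in S: xJ\subseteq I\}$; $I^0=(I:I)_S$ and $I^{n+1}=I^n\cdot I$ for $n\ge0$. For a subring $R\subseteq S$, an invertible ideal of $R$ within $S$ is an $R$-submodule $I\subseteq S$ for which there is an $R$-submodule $J\subseteq S$ with $IJ=R$. A number field is a finite-dimensional field extension of $\mathbb{Q}$; an order is a domain whose additive group is isomorphic to $\mathbb{Z}^n$ for some $n\ge 0$. *)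

From HB Require Import structures.
From mathcomp Require Import all_boot all_order all_algebra all_field.
Set Implicit Arguments. Unset Strict Implicit. Unset Printing Implicit Defensive.
Import Order.TTheory GRing.Theory Num.Theory.
Local Open Scope ring_scope.

Section Defs.
Variable S : comPzRingType.

Definition set_eq (A B : S -> Prop) : Prop := forall x, A x <-> B x.
Definition set_sub (A B : S -> Prop) : Prop := forall x, A x -> B x.

Definition add_subgroup (I : S -> Prop) : Prop :=
  I 0 /\ (forall x y, I x -> I y -> I (x - y)).

Definition subring (R : S -> Prop) : Prop :=
  R 1 /\ (forall x y, R x -> R y -> R (x - y)) /\
  (forall x y, R x -> R y -> R (x * y)).

Definition prodset (I J : S -> Prop) : S -> Prop := fun z =>
  exists n (a b : 'I_n -> S),
    (forall i, I (a i) /\ J (b i)) /\ z = \sum_(i < n) a i * b i.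

Definition colon (I J : S -> Prop) : S -> Prop := fun x =>
  forall y, J y -> I (x * y).

Fixpoint ipow (I : S -> Prop) (n : nat) : S -> Prop :=
  match n with
  | 0%N => colon I I
  | k.+1 => prodset (ipow I k) I
  end.

Definition blowup (I : S -> Prop) : S -> Prop := fun x =>
  exists k : nat, colon (ipow I k) (ipow I k) x.

Definition submodule (R M : S -> Prop) : Prop :=
  add_subgroup M /\ (forall r m, R r -> M m -> M (r * m)).

Definition invertible_ideal (R I : S -> Prop) : Prop :=
  submodule R I /\ exists J, submodule R J /\ set_eq (prodset I J) R.

Definition fin_gen (I : S -> Prop) : Prop :=
  exists n (g : 'I_n -> S),
    forall x, I x <-> exists c : 'I_n -> int, x = \sum_(i < n) g i *~ c i.

Definition is_order (R : S -> Prop) : Prop :=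
  subring R /\ (1 != 0 :> S) /\
  (forall x y, R x -> R y -> x * y = 0 -> x = 0 \/ y = 0) /\
  exists n (b : 'I_n -> S),
    (forall i, R (b i)) /\
    (forall x, R x <-> exists c : 'I_n -> int, x = \sum_(i < n) b i *~ c i) /\
    (forall c : 'I_n -> int, \sum_(i < n) b i *~ c i = 0 -> forall i, c i = 0).

End Defs.

(* Bl(I) is an increasing union of the rings (I^k : I^k), hence a ring. If J
   inverts RI, then 1 ∈ I^k J^k ⊆ R for every k (with J^0 = R), so any x with
   x I^k ⊆ I^k lies in x I^k J^k ⊆ I^k J^k ⊆ R.
   In a number field L, an x in (I^k : I^k) stabilises the nonzero finitely
   generated Z-module I^(k+1), so by the determinant trick it is integral over
   Z and its trace is an integer. A subring B of L with integral traces is a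
   lattice: for a Q-basis s of the span of B taken inside B, that span is a
   field, so the trace Gram matrix G of s is invertible, and det(G) times the
   s-coordinates embeds B additively into Z^n. A finite Z-basis of Bl(I) lies
   in a single (I^n : I^n), which is then all of Bl(I). *)

From HB Require Import structures.
From mathcomp Require Import all_boot all_order all_algebra all_field.
From Stdlib Require Import Classical Wf_nat.
Set Implicit Arguments. Unset Strict Implicit. Unset Printing Implicit Defensive.
Import Order.TTheory GRing.Theory Num.Theory.
Local Open Scope ring_scope.

Definition catf (T : Type) n1 n2 (a : 'I_n1 -> T) (b : 'I_n2 -> T) :
  'I_(n1 + n2) -> T :=
  fun i => match split i with inl j => a j | inr j => b j end.

Lemma catf_lshift T n1 n2 (a : 'I_n1 -> T) (b : 'I_n2 -> T) j :
  catf a b (lshift n2 j) = a j.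
Proof. by rewrite /catf -[lshift _ _]/(unsplit (inl j)) unsplitK. Qed.

Lemma catf_rshift T n1 n2 (a : 'I_n1 -> T) (b : 'I_n2 -> T) j :
  catf a b (rshift n1 j) = b j.
Proof. by rewrite /catf -[rshift _ _]/(unsplit (inr j)) unsplitK. Qed.

Section SetProducts.
Variable S : comPzRingType.
Implicit Types (A B C D I J R : S -> Prop) (x y z : S).

Lemma add_subgroupN I x : add_subgroup I -> I x -> I (- x).
Proof. by move=> [I0 IB] Ix; rewrite -sub0r; apply: IB. Qed.

Lemma add_subgroupD I x y : add_subgroup I -> I x -> I y -> I (x + y).
Proof.
move=> hI Ix Iy; rewrite -[y]opprK; apply: (proj2 hI) => //.
exact: add_subgroupN.
Qed.

Lemma add_subgroup_sum I (T : finType) (F : T -> S) :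
  add_subgroup I -> (forall t, I (F t)) -> I (\sum_t F t).
Proof.
move=> hI IF; apply: (big_ind I) => //; first by case: hI.
by move=> ? ?; apply: add_subgroupD.
Qed.

Lemma add_subgroupMz I x (c : int) : add_subgroup I -> I x -> I (x *~ c).
Proof.
move=> hI Ix; have IMn n : I (x *+ n).
  by elim: n => [|n IH]; [rewrite mulr0n; case: hI | rewrite mulrS; apply: add_subgroupD].
case: c => n; first exact: IMn.
by rewrite NegzE mulrNz; apply: add_subgroupN => //; apply: IMn.
Qed.

Lemma add_subgroup_subring R : subring R -> add_subgroup R.
Proof. by move=> [R1 [RB _]]; split => //; rewrite -(subrr 1); apply: RB. Qed.

Lemma prodset_ind A B (P : S -> Prop) : P 0 ->
  (forall x y, P x -> P y -> P (x + y)) ->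
  (forall a b, A a -> B b -> P (a * b)) -> forall z, prodset A B z -> P z.
Proof.
move=> P0 PD Pab z [n [a [b [AB ->]]]].
by apply: (big_ind P) => // i _; case: (AB i); apply: Pab.
Qed.

Lemma prodset0 A B : prodset A B 0.
Proof.
by exists 0%N, (fun=> 0), (fun=> 0); split; [case | rewrite big_ord0].
Qed.

Lemma prodsetM A B a b : A a -> B b -> prodset A B (a * b).
Proof.
by move=> Aa Bb; exists 1%N, (fun=> a), (fun=> b); rewrite big_ord1.
Qed.

Lemma prodsetD A B x y : prodset A B x -> prodset A B y -> prodset A B (x + y).
Proof.
move=> [n1 [a1 [b1 [AB1 ->]]]] [n2 [a2 [b2 [AB2 ->]]]].
exists (n1 + n2)%N, (catf a1 a2), (catf b1 b2); split.
  by move=> i; rewrite /catf; case: (split i).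
by rewrite big_split_ord; congr (_ + _); apply: eq_bigr => i _;
  rewrite ?catf_lshift ?catf_rshift.
Qed.

Lemma add_subgroup_prodset A B : add_subgroup B -> add_subgroup (prodset A B).
Proof.
move=> hB; split=> [|x y Px Py]; first exact: prodset0.
apply: prodsetD => //; move: y Py; apply: prodset_ind.
- by rewrite oppr0; apply: prodset0.
- by move=> u v Pu Pv; rewrite opprD; apply: prodsetD.
- by move=> a b Aa Bb; rewrite -mulrN; apply: prodsetM => //; apply: add_subgroupN.
Qed.

Lemma prodset_min A B C : add_subgroup C ->
  (forall a b, A a -> B b -> C (a * b)) -> set_sub (prodset A B) C.
Proof.
move=> hC CAB; apply: prodset_ind => //; first by case: hC.
by move=> x y; apply: add_subgroupD.
Qed.

Lemma prodsetS A A' B B' :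
  set_sub A A' -> set_sub B B' -> set_sub (prodset A B) (prodset A' B').
Proof.
move=> sA sB; apply: prodset_ind; [exact: prodset0 | exact: prodsetD |].
by move=> a b Aa Bb; apply: prodsetM; [apply: sA | apply: sB].
Qed.

Lemma prodset_mul A B C D z w :
  prodset A B z -> prodset C D w -> prodset (prodset A C) (prodset B D) (z * w).
Proof.
move=> ABz; move: w; apply: prodset_ind.
- by rewrite mulr0; apply: prodset0.
- by move=> ? ? ? ?; rewrite mulrDr; apply: prodsetD.
move=> c d Cc Dd; move: z ABz; apply: prodset_ind.
- by rewrite mul0r; apply: prodset0.
- by move=> ? ? ? ?; rewrite mulrDl; apply: prodsetD.
by move=> a b Aa Bb; rewrite mulrACA; apply: prodsetM; apply: prodsetM.
Qed.

Lemma prodset_interchange A B C D :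
  set_sub (prodset (prodset A C) (prodset B D)) (prodset (prodset A B) (prodset C D)).
Proof.
apply: prodset_ind; [exact: prodset0 | exact: prodsetD |].
exact: prodset_mul.
Qed.

Lemma prodset_absorb R I J : (forall r j, R r -> J j -> J (r * j)) ->
  set_sub (prodset (prodset R I) J) (prodset I J).
Proof.
move=> RJ; apply: prodset_ind; [exact: prodset0 | exact: prodsetD |].
move=> z j RIz Jj; move: z RIz; apply: prodset_ind.
- by rewrite mul0r; apply: prodset0.
- by move=> ? ? ? ?; rewrite mulrDl; apply: prodsetD.
by move=> r i Rr Ii; rewrite mulrAC mulrC; apply: prodsetM => //; apply: RJ.
Qed.

Lemma prodset_subring R : subring R -> set_sub (prodset R R) R.
Proof.
move=> hR; apply: prodset_min; first exact: add_subgroup_subring.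
by case: hR => _ [_ RM]; apply: RM.
Qed.

End SetProducts.

Section Blowup.
Variable S : comPzRingType.
Implicit Types (A B I J R : S -> Prop) (x y z : S).

Lemma colon1 A : colon A A 1.
Proof. by move=> y Ay; rewrite mul1r. Qed.

Lemma subring_colon J : add_subgroup J -> subring (colon J J).
Proof.
move=> [J0 JB]; split; first exact: colon1.
split=> x y Cx Cy z Jz; first by rewrite mulrBl; apply: JB; [apply: Cx | apply: Cy].
by rewrite -mulrA; apply: Cx; apply: Cy.
Qed.

Lemma add_subgroup_ipow I k : add_subgroup I -> add_subgroup (ipow I k).
Proof.
case: k => [|k] hI /=; last exact: add_subgroup_prodset.
exact/add_subgroup_subring/subring_colon.
Qed.

Lemma colon_prodset A B x :
  colon A A x -> colon (prodset A B) (prodset A B) x.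
Proof.
move=> Cx; apply: prodset_ind.
- by rewrite mulr0; apply: prodset0.
- by move=> ? ? ? ?; rewrite mulrDr; apply: prodsetD.
by move=> a b Aa Bb; rewrite mulrA; apply: prodsetM => //; apply: Cx.
Qed.

Lemma colon_ipowS I k x :
  colon (ipow I k) (ipow I k) x -> colon (ipow I k.+1) (ipow I k.+1) x.
Proof. exact: colon_prodset. Qed.

Lemma colon_ipow_mono I k l x : (k <= l)%N ->
  colon (ipow I k) (ipow I k) x -> colon (ipow I l) (ipow I l) x.
Proof.
move=> /subnKC <-; elim: (l - k)%N => [|m IH Cx]; first by rewrite addn0.
by rewrite addnS; apply: colon_ipowS; apply: IH.
Qed.

Lemma blowup_colon_common I x y : blowup I x -> blowup I y ->
  exists k, colon (ipow I k) (ipow I k) x /\ colon (ipow I k) (ipow I k) y.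
Proof.
move=> [k Cx] [l Cy]; exists (maxn k l).
by split; apply: colon_ipow_mono (Cx) || apply: colon_ipow_mono (Cy);
  rewrite ?leq_maxl ?leq_maxr.
Qed.

Lemma subring_blowup I : add_subgroup I -> subring (blowup I).
Proof.
move=> hI; split; first by exists 0%N; apply: colon1.
split=> x y Bx By; have [k [Cx Cy]] := blowup_colon_common Bx By; exists k;
  have [_ [CB CM]] := subring_colon (add_subgroup_ipow k hI); [exact: CB | exact: CM].
Qed.

Lemma colon_sub_of_one A B R :
  prodset A B 1 -> set_sub (prodset A B) R -> set_sub (colon A A) R.
Proof. by move=> AB1 sABR x Cx; rewrite -[x]mulr1; apply/sABR/colon_prodset. Qed.

End Blowup.

Section Invertible.
Variable S : comPzRingType.
Implicit Types (I J R : S -> Prop).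

Fixpoint mpow R J k : S -> Prop :=
  if k is k'.+1 then prodset (mpow R J k') J else R.

Lemma blowup_sub_invertible I R :
  subring R -> invertible_ideal R (prodset R I) -> set_sub (blowup I) R.
Proof.
move=> hR [_ [J [[_ RJ] RIJ]]].
have [R1 _] := hR; have RR := prodset_subring hR.
have hRadd := add_subgroup_subring hR.
have IJ1 : prodset I J 1 by apply/prodset_absorb/RIJ.
have IJR : set_sub (prodset I J) R.
  move=> z IJz; apply/RIJ; apply: prodsetS IJz => // i Ii.
  by rewrite -[i]mul1r; apply: prodsetM.
have IJpow k : prodset (ipow I k) (mpow R J k) 1 /\
               set_sub (prodset (ipow I k) (mpow R J k)) R.
  elim: k => [|k [IJk1 IJkR]] /=.
    split; first by rewrite -[1]mulr1; apply: prodsetM => //; apply: colon1.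
    apply: prodset_min => // x r Cx Rr; apply/RR/prodsetM => //.
    exact: colon_sub_of_one IJ1 IJR _ Cx.
  split; first by rewrite -[1]mulr1; apply: prodset_mul.
  move=> z /prodset_interchange; apply: prodset_min => // u v /IJkR Ru /IJR Rv.
  exact/RR/prodsetM.
move=> x [k Cx]; have [IJk1 IJkR] := IJpow k.
exact: colon_sub_of_one IJk1 IJkR _ Cx.
Qed.

End Invertible.

Section FinGen.
Variable S : comPzRingType.
Implicit Types (A B I : S -> Prop) (x : S).

Definition int_span (T : finType) (f : T -> S) x :=
  exists c : T -> int, x = \sum_t f t *~ c t.

Lemma add_subgroup_int_span (T : finType) (f : T -> S) : add_subgroup (int_span f).
Proof.
split; first by exists (fun=> 0); rewrite big1 // => t _; rewrite mulr0z.
move=> _ _ [c ->] [d ->]; exists (fun t => c t - d t).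
by rewrite -sumrB; apply: eq_bigr => t _; rewrite mulrzBr.
Qed.

Lemma int_span_gen (T : finType) (f : T -> S) t : int_span f (f t).
Proof.
exists (fun s => (s == t)%:Z); rewrite (bigD1 t) //= eqxx mulr1z big1 ?addr0 //.
by move=> s /negbTE ->; rewrite mulr0z.
Qed.

Lemma int_span_min (T : finType) (f : T -> S) A :
  add_subgroup A -> (forall t, A (f t)) -> set_sub (int_span f) A.
Proof.
move=> hA Af _ [c ->]; apply: add_subgroup_sum => // t.
exact: add_subgroupMz.
Qed.

Lemma int_span_mul (T1 T2 : finType) (f1 : T1 -> S) (f2 : T2 -> S) a b :
  int_span f1 a -> int_span f2 b ->
  int_span (fun t : T1 * T2 => f1 t.1 * f2 t.2) (a * b).
Proof.
move=> [c ->] [d ->]; exists (fun t => c t.1 * d t.2).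
rewrite -(pair_bigA _ (fun i j => f1 i * f2 j *~ (c i * d j))) mulr_suml.
apply: eq_bigr => i _; rewrite mulr_sumr.
by apply: eq_bigr => j _; rewrite mulrzAl mulrzAr mulrzA_C.
Qed.

Lemma fin_genP A : fin_gen A <->
  exists (T : finType) (f : T -> S), forall x, A x <-> int_span f x.
Proof.
split=> [[n [g Ag]] | [T [f Af]]]; first by exists 'I_n, g.
pose g (i : 'I_#|T|) := f (enum_val i).
suff [fg gf] : set_sub (int_span f) (int_span g) /\ set_sub (int_span g) (int_span f).
  by exists #|T|, g => x; rewrite Af; split; [apply: fg | apply: gf].
split; apply: int_span_min; try exact: add_subgroup_int_span.
  by move=> t; rewrite -(enum_rankK t); apply: (int_span_gen g).
by move=> i; apply: int_span_gen.
Qed.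

Lemma fin_gen_eq A B : set_eq A B -> fin_gen A -> fin_gen B.
Proof. by move=> AB [n [g Ag]]; exists n, g => x; rewrite -AB. Qed.

Lemma fin_gen_prodset A B :
  add_subgroup B -> fin_gen A -> fin_gen B -> fin_gen (prodset A B).
Proof.
move=> hB /fin_genP [T1 [f1 Af]] /fin_genP [T2 [f2 Bf]]; apply/fin_genP.
exists (T1 * T2)%type, (fun t => f1 t.1 * f2 t.2) => x; split.
  apply: prodset_min; first exact: add_subgroup_int_span.
  by move=> a b /Af Aa /Bf Bb; apply: int_span_mul.
apply: int_span_min; first exact: add_subgroup_prodset.
by move=> t; apply: prodsetM; [apply/Af | apply/Bf]; apply: int_span_gen.
Qed.

Lemma ipow1 I : add_subgroup I -> set_eq (ipow I 1) I.
Proof.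
move=> hI x; split; first by apply: prodset_min => // c i Cc Ii; apply: Cc.
by move=> Ix; rewrite -[x]mul1r; apply: prodsetM => //; apply: colon1.
Qed.

Lemma fin_gen_ipowS I k : add_subgroup I -> fin_gen I -> fin_gen (ipow I k.+1).
Proof.
move=> hI fgI; elim: k => [|k IH]; last exact: fin_gen_prodset.
by apply: fin_gen_eq fgI => x; rewrite ipow1.
Qed.

Lemma ipow_exprS I k a : I a -> ipow I k.+1 (a ^+ k.+1).
Proof.
move=> Ia; elim: k => [|k IH]; last by rewrite exprSr; apply: prodsetM.
by rewrite -[a ^+ 1]mul1r; apply: prodsetM => //; apply: colon1.
Qed.

Lemma blowup_colon_fin_gen I : add_subgroup I -> fin_gen (blowup I) ->
  exists n, set_eq (blowup I) (colon (ipow I n) (ipow I n)).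
Proof.
move=> hI /fin_genP [T [f Bf]].
have [K CK] : exists K : T -> nat, forall t, colon (ipow I (K t)) (ipow I (K t)) (f t).
  by apply: (fin_all_exists (P := fun t k => colon (ipow I k) (ipow I k) (f t))) => t;
    apply/Bf/int_span_gen.
exists (\max_t K t) => x; split=> [/Bf | Cx]; last by exists (\max_t K t).
apply: int_span_min => [|t].
  exact/add_subgroup_subring/subring_colon/add_subgroup_ipow.
by apply: colon_ipow_mono (CK t); apply: leq_bigmax.
Qed.

End FinGen.

Section Integral.
Variable F : fieldType.

Lemma integral_colon_fin_gen (M : F -> Prop) x :
  fin_gen M -> (exists a, M a /\ a != 0) -> colon M M x -> integralOver intr x.
Proof.
move=> [n [g Mg]] [a [Ma a_neq0]] Cx.
have /existsP [i0 gi0_neq0] : [exists i, g i != 0].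
  apply: contraNT a_neq0; rewrite negb_exists => /forallP g0.
  have [c ->] := proj1 (Mg a) Ma; apply/eqP/big1 => i _.
  by rewrite (eqP (negPn (g0 i))) mul0rz.
have [C xgC] : exists C : 'I_n -> 'I_n -> int,
    forall i, x * g i = \sum_j g j *~ C i j.
  apply: (fin_all_exists (P := fun i (c : 'I_n -> int) =>
    x * g i = \sum_j g j *~ c j)) => i.
  by apply/Mg/Cx/Mg; exists (fun j => (j == i)%:Z);
    rewrite (bigD1 i) //= eqxx mulr1z big1 ?addr0 // => j /negbTE ->.
(* the generators g form an eigenvector of the integer matrix A for x *)
pose A : 'M[int]_n := \matrix_(j, i) C i j.
exists (char_poly A); first exact: char_poly_monic.
rewrite map_char_poly -eigenvalue_root_char; apply/eigenvalueP.
exists (\row_i g i).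
  by apply/rowP => i; rewrite !mxE xgC; apply: eq_bigr => j _; rewrite !mxE mulrzr.
by apply/eqP => /rowP /(_ i0); rewrite !mxE; apply/eqP.
Qed.

Lemma blowup_integral (I : F -> Prop) x :
  add_subgroup I -> fin_gen I -> (exists a, I a /\ a != 0) ->
  blowup I x -> integralOver intr x.
Proof.
move=> hI fgI [a [Ia a_neq0]] [k Cx].
apply: (integral_colon_fin_gen (M := ipow I k.+1)).
- exact: fin_gen_ipowS.
- by exists (a ^+ k.+1); split; [apply: ipow_exprS | rewrite expf_neq0].
- exact: colon_ipowS.
Qed.

End Integral.

Section Trace.
Variable L : fieldExtType rat.
Local Notation d := (\dim {:L}).
Local Notation e := (vbasis {:L}).

Definition regmx (y : L) : 'M[rat]_d := \matrix_(i, j) coord e j (e`_i * y).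

Fact regmx_is_linear : linear regmx.
Proof. by move=> a y z; apply/matrixP => i j; rewrite !mxE mulrDr -scalerAr linearP. Qed.

HB.instance Definition _ :=
  GRing.isLinear.Build rat L 'M[rat]_d _ regmx regmx_is_linear.

Lemma regmxM y z : regmx (y * z) = regmx y *m regmx z.
Proof.
apply/matrixP => i j; rewrite !mxE mulrA.
rewrite {1}(coord_vbasis (memvf (e`_i * y))) mulr_suml linear_sum.
by apply: eq_bigr => k _; rewrite -scalerAl linearZ /= !mxE.
Qed.

Lemma regmx1 : regmx 1 = 1%:M.
Proof.
by apply/matrixP => i j; rewrite !mxE mulr1 coord_free //; apply: basis_free (vbasisP _).
Qed.

Definition ftrace (y : L) : rat := \tr (regmx y).

Fact ftrace_is_scalar : scalar ftrace.
Proof. by move=> a y z; rewrite /ftrace linearP mxtraceD mxtraceZ. Qed.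

HB.instance Definition _ :=
  GRing.isLinear.Build rat L rat *%R ftrace ftrace_is_scalar.

Lemma ftrace1 : ftrace 1 = d%:R.
Proof. by rewrite /ftrace regmx1 mxtrace1. Qed.

Lemma regmx_eigenvalue_root (p : {poly int}) y (z : algC) :
  root (map_poly intr p) y -> eigenvalue (map_mx ratr (regmx y)) z ->
  root (map_poly intr p) z.
Proof.
move=> /rootP py0 /eigenvalueP [v vyz v_neq0].
have vXz k : v *m map_mx ratr (regmx (y ^+ k)) = z ^+ k *: v.
  elim: k => [|k IH]; first by rewrite expr0 regmx1 map_mx1 mulmx1 scale1r.
  by rewrite exprSr regmxM map_mxM mulmxA IH -scalemxAl vyz scalerA -exprSr.
have : v *m map_mx ratr (regmx (map_poly intr p).[y]) = (map_poly intr p).[z] *: v.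
  rewrite !(horner_coef_wide _ (size_poly _ _)) linear_sum map_mx_sum.
  rewrite mulmx_sumr scaler_suml; apply: eq_bigr => i _.
  rewrite !coef_map /= -scaler_int -scalerAl mul1r linearZ /= map_mxZ.
  by rewrite -scalemxAr vXz scalerA rmorph_int.
rewrite py0 linear0 map_mx0 mulmx0 => /esym/eqP.
by rewrite scaler_eq0 (negbTE v_neq0) orbF.
Qed.

Lemma mxtrace_Aint n (A : 'M[algC]_n) :
  (forall z, eigenvalue A z -> z \in Aint) -> \tr A \in Aint.
Proof.
case: n A => [|n] A AintA; first by rewrite /mxtrace big_ord0 rpred0.
have [rs Drs] := closed_field_poly_normal (char_poly A).
rewrite (monicP (char_poly_monic A)) scale1r in Drs.
have : char_poly A \is a polyOver Aint.
  rewrite Drs big_seq; apply: rpred_prod => z z_rs; rewrite polyOverXsubC.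
  by apply: AintA; rewrite eigenvalue_root_char Drs root_prod_XsubC.
by move=> /polyOverP /(_ n); rewrite (char_poly_trace A) // rpredN.
Qed.

Lemma ftrace_int y : integralOver intr y -> ftrace y \is a Num.int.
Proof.
move=> [p p_monic py0]; rewrite -Cint_rat; apply: Cint_rat_Aint; first exact: Crat_rat.
rewrite /ftrace -trace_map_mx; apply: mxtrace_Aint => z /(regmx_eigenvalue_root py0).
move/root_monic_Aint; apply; first exact: monic_map.
by apply/polyOverP => i; rewrite coef_map rpred_int.
Qed.

End Trace.

Section Lattice.
Variable S : comPzRingType.
Implicit Types (H : S -> Prop) (x : S).

Definition has_int_basis H := exists m (h : 'I_m -> S),
  (forall j, H (h j)) /\
  (forall x, H x <-> exists c : 'I_m -> int, x = \sum_(j < m) h j *~ c j) /\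
  (forall c : 'I_m -> int, \sum_(j < m) h j *~ c j = 0 -> forall j, c j = 0).

Lemma has_int_basis_ext H H' x1 :
  add_subgroup H -> H x1 -> set_sub H' H -> has_int_basis H' ->
  (forall x, H x -> exists q, H' (x - x1 *~ q)) ->
  (forall q, H' (x1 *~ q) -> q = 0) -> has_int_basis H.
Proof.
move=> hH Hx1 sH'H [m [h [H'h [spanh freeh]]]] reduce x1_free.
have Hh (j : 'I_(m + 1)) : H (catf h (fun=> x1) j).
  by rewrite /catf; case: (split j) => [j'|_] //; apply: sH'H.
exists (m + 1)%N, (catf h (fun=> x1)); split=> //; split=> [x|c].
  split=> [Hx | [c ->]]; last first.
    by apply: add_subgroup_sum => // j; apply: add_subgroupMz.
  have [q /spanh [c Dx]] := reduce x Hx.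
  exists (catf c (fun=> q)); rewrite big_split_ord big_ord1 !catf_rshift.
  under eq_bigr do rewrite !catf_lshift.
  by rewrite /= -Dx subrK.
rewrite big_split_ord big_ord1 /= !catf_rshift.
under eq_bigr do rewrite catf_lshift.
move=> /eqP; rewrite addr_eq0 => /eqP hc.
have cq0 : c (rshift m ord0) = 0.
  apply: x1_free; apply/spanh; exists (fun j => - c (lshift 1 j)).
  by under eq_bigr do rewrite mulrNz; rewrite sumrN hc opprK.
have ch0 j : c (lshift 1 j) = 0.
  by apply: (freeh (fun j => c (lshift 1 j))); rewrite hc cq0 mulr0z oppr0.
by move=> j; rewrite -(splitK j); case: (split j) => [j'|j'] /=; rewrite ?(ord1 j').
Qed.

Lemma has_int_basis_ker H (f : {additive S -> rat}) :
  add_subgroup H -> (forall x, H x -> f x \is a Num.int) ->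
  has_int_basis (fun x => H x /\ f x = 0) -> has_int_basis H.
Proof.
move=> hH fH basisK; pose K x := H x /\ f x = 0.
have [[x0 [Hx0 fx0]] | f0] := classic (exists x, H x /\ f x != 0); last first.
  have HK x : H x -> K x.
    by move=> Hx; split=> //; have [//|fx] := eqVneq (f x) 0; case: f0; exists x.
  have [m [h [Kh [spanh freeh]]]] := basisK.
  exists m, h; split=> [j|]; first by case: (Kh j).
  by split=> // x; rewrite -spanh; split=> [/HK | []].
pose P n := (0 < n)%N /\ exists x, H x /\ f x = n%:R.
have P_inh : exists n, P n.
  have /intrP [t ft] := fH x0 Hx0; exists `|t|%N; split.
    by rewrite absz_gt0; move: fx0; apply: contraNneq => t0; rewrite ft t0.
  exists (x0 *~ sgz t); split; first exact: add_subgroupMz.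
  by rewrite raddfMz ft mulrzA_C -abszEsg.
(* f x1 = n0 is the least positive value of f on H, so f(H) = n0 Z *)
have [n0 [[[n0_gt0 [x1 [Hx1 fx1]]] n0_min] _]] :=
  dec_inh_nat_subset_has_unique_least_element P (fun n => classic (P n)) P_inh.
apply: (has_int_basis_ext hH Hx1 (H' := K)) => // [x [] // | x Hx | q [_]].
  have /intrP [t ft] := fH x Hx; pose r := (t %% n0)%Z.
  have r_ge0 : 0 <= r by apply: modz_ge0; rewrite -lt0n.
  have r_lt : r < n0 by apply: ltz_pmod.
  have Hxq : H (x - x1 *~ (t %/ n0)%Z) by apply: (proj2 hH) => //; apply: add_subgroupMz.
  have fxq : f (x - x1 *~ (t %/ n0)%Z) = r%:~R.
    rewrite raddfB raddfMz ft fx1 pmulrn mulrzA_C {1}(divz_eq t n0) intrD.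
    by rewrite addrAC subrr add0r.
  exists (t %/ n0)%Z; split => //; rewrite fxq.
  have [[|k] Dr] : exists k : nat, r = k by exists `|r|%N; rewrite gez0_abs.
    by rewrite Dr.
  have : (n0 <= k.+1)%N.
    apply/ssrnat.leP/n0_min; split=> //.
    by exists (x - x1 *~ (t %/ n0)%Z); rewrite fxq Dr.
  by rewrite leqNgt -ltz_nat -Dr r_lt.
rewrite raddfMz fx1 => /eqP; rewrite mulrz_eq0 pnatr_eq0 eqn0Ngt n0_gt0 orbF.
by move/eqP.
Qed.

Lemma has_int_basis_injective r H (f : 'I_r -> {additive S -> rat}) :
  add_subgroup H -> (forall i x, H x -> f i x \is a Num.int) ->
  (forall x, H x -> (forall i, f i x = 0) -> x = 0) -> has_int_basis H.
Proof.
elim: r H f => [|r IH] H f hH fH f_inj.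
  exists 0%N, (fun=> 0); split; first by case.
  split=> [x|c _]; last by case.
  split=> [Hx | [c ->]]; last by rewrite big_ord0; case: hH.
  by exists (fun=> 0); rewrite big_ord0; apply: f_inj => // -[].
apply: (has_int_basis_ker hH (fH ord_max)).
apply: (IH _ (fun i => f (lift ord_max i))) => [|i x [Hx _] | x [Hx fx0] f0].
- split; first by split; [case: hH | apply: raddf0].
  move=> x y [Hx fx] [Hy fy]; split; first exact: (proj2 hH).
  by rewrite raddfB fx fy subrr.
- exact: fH.
- by apply: f_inj => // i; case: (unliftP ord_max i) => [j ->|->].
Qed.

End Lattice.

Lemma exists_free_span (K : fieldType) (vT : vectType K) (B : vT -> Prop) :
  exists s : seq vT,
    [/\ free s, forall x, x \in s -> B x & forall x, B x -> x \in <<s>>%VS].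
Proof.
suff extend k s : (\dim {:vT} - size s < k)%N -> free s ->
    (forall x, x \in s -> B x) -> exists s : seq vT,
    [/\ free s, forall x, x \in s -> B x & forall x, B x -> x \in <<s>>%VS].
  by apply: (extend (\dim {:vT}).+1 [::]); rewrite ?nil_free // ltnS leq_subr.
elim: k s => // k IH s lt_k free_s sB.
have [[x [Bx s_x]] | all_in] := classic (exists x, B x /\ x \notin <<s>>%VS).
  have free_xs : free (x :: s) by rewrite free_cons s_x.
  apply: (IH (x :: s)) => // [|y]; last by rewrite inE => /predU1P [-> | /sB].
  have := dimvS (subvf <<x :: s>>%VS); rewrite (eqP free_xs) /= => dim_xs.
  by rewrite subnS -ltnS prednK ?subn_gt0.
exists s; split=> // x Bx; apply/negPn/negP => s_x.
by apply: all_in; exists x.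
Qed.

Section TraceLattice.
Variable L : fieldExtType rat.
Implicit Types (B : L -> Prop) (x y : L).

Lemma span_subring_aspace B (s : seq L) : subring B ->
  (forall x, x \in s -> B x) -> (forall x, B x -> x \in <<s>>%VS) ->
  is_aspace <<s>>%VS.
Proof.
move=> [B1 [_ BM]] sB Bs; rewrite /is_aspace has_algid1 ?Bs //=.
pose t := in_tuple s; apply/prodvP => u w su sw.
rewrite (coord_span (X := t) su) (coord_span (X := t) sw).
rewrite mulr_suml; apply: rpred_sum => i _; rewrite mulr_sumr.
apply: rpred_sum => j _; rewrite -scalerAl -scalerAr; do 2!apply: rpredZ.
by apply/Bs/BM; apply/sB/mem_nth.
Qed.

Lemma ftrace_gram_det_neq0 n (s : n.-tuple L) : free s -> is_aspace <<s>>%VS ->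
  \det (\matrix_(i, j) ftrace (s`_i * s`_j) : 'M_n) != 0.
Proof.
move=> free_s s_alg; apply/negP => /det0P [v v_neq0 vG0].
pose y := \sum_i v ord0 i *: s`_i.
have y_neq0 : y != 0.
  move: v_neq0; apply: contraNneq => y0; apply/eqP/rowP => i.
  by rewrite mxE; move/freeP: free_s => /(_ _ y0) ->.
have yV : y \in <<s>>%VS.
  by apply: memv_suml => i _; rewrite memvZ // memv_span // mem_nth // size_tuple.
have yVinv : y^-1 \in <<s>>%VS by have : y^-1 \in ASpace s_alg by rewrite memvV.
have ys0 (j : 'I_n) : ftrace (y * s`_j) = 0.
  move/rowP/(_ j): vG0; rewrite !mxE => <-.
  rewrite mulr_suml linear_sum; apply: eq_bigr => i _.
  by rewrite -scalerAl linearZ !mxE.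
(* <<s>> is a field, so y^-1 pairs with y to give ftrace 1 = d *)
have : ftrace (y * y^-1) = 0.
  rewrite (coord_span yVinv) mulr_sumr linear_sum big1 // => j _.
  by rewrite -scalerAr linearZ /= ys0 mulr0.
rewrite mulfV // ftrace1 => /eqP; rewrite pnatr_eq0 => /eqP d0.
by have := adim_gt0 {:L}; rewrite d0.
Qed.

Lemma has_int_basis_ftrace_int B :
  subring B -> (forall x, B x -> ftrace x \is a Num.int) -> has_int_basis B.
Proof.
move=> hB Bint; have [_ [_ BM]] := hB.
have [s0 [free_s s0B Bs]] := exists_free_span B.
pose n := size s0; pose s : n.-tuple L := in_tuple s0.
have sB (i : 'I_n) : B s`_i by apply/s0B/mem_nth.
pose Gz : 'M[int]_n := \matrix_(i, j) Num.floor (ftrace (s`_i * s`_j)).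
have GzE : map_mx intr Gz = \matrix_(i, j) ftrace (s`_i * s`_j).
  by apply/matrixP => i j; rewrite !mxE floorK //; apply/Bint/BM.
pose D : rat := (\det Gz)%:~R.
have D_neq0 : D != 0.
  rewrite /D -det_map_mx GzE; apply: ftrace_gram_det_neq0 => //.
  exact: span_subring_aspace hB s0B Bs.
have coord_int i x : B x -> coord s i x * D \is a Num.int.
  move=> Bx; pose tz : 'rV[int]_n := \row_j Num.floor (ftrace (x * s`_j)).
  have xG : \row_j coord s j x *m map_mx intr Gz = map_mx intr tz.
    apply/rowP => j; rewrite GzE !mxE floorK; last exact/Bint/BM.
    rewrite {2}(coord_span (X := s) (Bs x Bx)) mulr_suml linear_sum.
    by apply: eq_bigr => k _; rewrite !mxE -scalerAl linearZ.
  (* Cramer's rule *)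
  move/(congr1 (mulmx^~ (map_mx intr (\adj Gz)))): xG.
  rewrite -mulmxA -!map_mxM mul_mx_adj map_scalar_mx mul_mx_scalar.
  by move/rowP/(_ i); rewrite !mxE mulrC => ->; apply: rpred_int.
apply: (has_int_basis_injective (f := fun i => D \o* coord s i)).
- exact: add_subgroup_subring.
- by move=> i x Bx; apply: coord_int.
move=> x Bx f0; rewrite (coord_span (X := s) (Bs x Bx)) big1 // => i _.
have /eqP := f0 i; rewrite /= mulf_eq0 (negbTE D_neq0) orbF => /eqP ->.
exact: scale0r.
Qed.

End TraceLattice.

Lemma has_int_basis_blowup (L : fieldExtType rat) (I : L -> Prop) :
  add_subgroup I -> fin_gen I -> (exists a, I a /\ a != 0) ->
  has_int_basis (blowup I).
Proof.
move=> hI fgI nzI; apply: has_int_basis_ftrace_int; first exact: subring_blowup.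
by move=> x /(blowup_integral hI fgI nzI)/ftrace_int.
Qed.

Theorem proposition4p37 :
  (forall (S : comPzRingType) (I : S -> Prop),
    add_subgroup I ->
    [/\ subring (blowup I),
        (forall R : S -> Prop, subring R ->
           invertible_ideal R (prodset R I) -> set_sub (blowup I) R)
      & (forall n : nat,
           invertible_ideal (colon (ipow I n) (ipow I n))
             (prodset (colon (ipow I n) (ipow I n)) I) ->
           set_eq (colon (ipow I n) (ipow I n)) (blowup I))]) /\
  (forall (L : fieldExtType rat) (I : L -> Prop),
    add_subgroup I -> fin_gen I -> (exists x, I x /\ x != 0) ->
    (exists n : nat, set_eq (blowup I) (colon (ipow I n) (ipow I n))) /\
    is_order (blowup I)).
Proof.
split=> [S I hI | L I hI fgI nzI].
  split; [exact: subring_blowup | by move=> R; apply: blowup_sub_invertible |].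
  move=> n inv x; split=> [Cx | ]; first by exists n.
  exact: blowup_sub_invertible (subring_colon (add_subgroup_ipow n hI)) inv x.
have [m [h [Bh [spanh freeh]]]] := has_int_basis_blowup hI fgI nzI.
split; first by apply: blowup_colon_fin_gen => //; exists m, h.
split; first exact: subring_blowup.
split; first exact: oner_neq0.
split; last by exists m, h.
by move=> x y _ _ /eqP; rewrite mulf_eq0 => /orP [] /eqP; [left | right].
Qed.
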